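(* The category of algebras for the pointed endofunctor $(T,t)$ on $\mathsf{cSet}$ defined below is isomorphic to the category of uniform Kan complexes.
   Context: Let $\mathbb{B}$ be the category of finite sets $[n]=\{\bot,x_1,\dots,x_n,\top\}$ ($n\ge0$, $\bot\ne\top$) and functions preserving $\bot,\top$; $\mathsf{cSet}$ is the category of presheaves on $\mathbb{B}^{op}$. $\mathrm{I}^n$ is the representable on $[n]$, $\mathrm{I}^n\cong\mathrm{I}\times\dots\times\mathrm{I}$, $\mathrm{I}=\mathrm{I}^1$; the two maps $[1]\to[0]$ give endpoints $0,1:1\to\mathrm{I}$. For $1\le i\le n$, $d\in\{0,1\}$, the face $\alpha_i^d:\mathrm{I}^{n-1}\to\mathrm{I}^n$ inserts $d$ in coordinate $i$; for $e\in\{0,1\}$ the open box $\sqcup^n_e\rightarrowtail\mathrm{I}^n$ is the union of the images of all faces $\alpha_i^d$ with $(i,d)\ne(1,e)$, with inclusion $i^n_e$. A uniform Kan complex is a cubical set $X$ with, for each $n\ge1$, $e\in\{0,1\}$, $k\ge1$ and each $b:\mathrm{I}^k\times\sqcup^n_e\to X$, a chosen extension $\phi(b):\mathrm{I}^k\times\mathrm{I}^n\to X$ with $\phi(b)\circ(1\times i^n_e)=b$, such that $\phi(b\circ(\alpha\times 1))=\phi(b)\circ(\alpha\times1)$ for every $\alpha:\mathrm{I}^j\to\mathrm{I}^k$ ($j\ge 1$). A morphism of uniform Kan complexes $(X,\phi)\to(Y,\psi)$ is a map $h:X\to Y$ with $h\circ\phi(b)=\psi(h\circ b)$ for all such $b$.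 Define $T:\mathsf{cSet}\to\mathsf{cSet}$ with point $t:1\to T$: $T(X)$ is the pushout of \[ \textstyle\coprod_{n,e} X^{\sqcup^n_e}\times\mathrm{I}^n \xleftarrow{\ \coprod 1\times i^n_e\ } \coprod_{n,e}X^{\sqcup^n_e}\times\sqcup^n_e \xrightarrow{\ [\mathrm{eval}]\ } X, \] the coproducts over $n\ge1$, $e\in\{0,1\}$, with $X^{\sqcup^n_e}$ the exponential and $\mathrm{eval}$ evaluation; $t_X:X\to T(X)$ is the pushout injection. A $(T,t)$-algebra is a pair $(X,\phi)$ with $\phi:TX\to X$ and $\phi\circ t_X=1_X$; a morphism $(X,\phi)\to(Y,\psi)$ is $h:X\to Y$ with $h\phi=\psi\circ T(h)$. *)

From mathcomp Require Import all_boot.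
From Stdlib Require Import Relations ProofIrrelevance FunctionalExtensionality
  PropExtensionality.


Set Implicit Arguments.
Unset Strict Implicit.
Unset Printing Implicit Defensive.

(* The cube category B: objects [n] = {bot, x_1..x_n, top}, maps preserving
   bot and top.  x_(i+1) is encoded as PX i with i : 'I_n.                 *)
Inductive pt (n : nat) : Type := Bot | Top | PX of 'I_n.
Arguments Bot {n}. Arguments Top {n}. Arguments PX {n}.

Record bmap (m n : nat) := BMap {
  bfun :> pt m -> pt n;
  bfun_bot : bfun Bot = Bot;
  bfun_top : bfun Top = Top }.
Arguments bfun {m n}. Arguments BMap {m n}.

Lemma bmap_eq m n (f g : bmap m n) : bfun f = bfun g -> f = g.
Proof.
case: f g => f f0 f1 [g g0 g1] /= E; subst g.
by rewrite (proof_irrelevance _ f0 g0) (proof_irrelevance _ f1 g1).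
Qed.

Definition bid n : bmap n n := @BMap n n (fun p => p) erefl erefl.


Definition bcomp m n p (g : bmap n p) (f : bmap m n) : bmap m p.
Proof.
refine (@BMap m p (fun x => g (f x)) _ _).
- by rewrite bfun_bot bfun_bot.
- by rewrite bfun_top bfun_top.
Defined.
Arguments bcomp {m n p}.

(* Cubical sets = presheaves on B^op = (covariant) functors B -> Type.    *)
Record precset := PreCSet {
  obj :> nat -> Type;
  act : forall m n, bmap m n -> obj m -> obj n }.
Arguments act {p m n}.

Definition is_cset (X : precset) : Prop :=
  (forall m (x : X m), act (bid m) x = x) /\
  (forall m n p (f : bmap m n) (g : bmap n p) (x : X m),
      act (bcomp g f) x = act g (act f x)).

Record cset := CSet { cpre :> precset; cset_laws : is_cset cpre }.

Unset Implicit Arguments.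
Record hom (A B : precset) := Hom {
  hf :> forall m, A m -> B m;
  hnat : forall m n (f : bmap m n) (a : A m), hf n (act f a) = act f (hf m a) }.
Arguments hf {A B} _ _ _.
Arguments Hom {A B}.
Set Implicit Arguments.

Lemma hom_eq (A B : precset) (h k : hom A B) : (forall m a, h m a = k m a) -> h = k.
Proof.
case: h k => h hn [k kn] /= E.
have E' : h = k by apply: functional_extensionality_dep => m;
  apply: functional_extensionality => a; exact: E.
subst k; by rewrite (proof_irrelevance _ hn kn).
Qed.

Definition hcomp A B C (g : hom B C) (f : hom A B) : hom A C.
Proof.
refine (@Hom A C (fun m a => g m (f m a)) _).
by move=> m n u a; rewrite !hnat.
Defined.

Definition cube (n : nat) : precset :=
  @PreCSet (fun m => bmap n m) (fun m m' (f : bmap m m') g => bcomp f g).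

Definition cprod (A B : precset) : precset :=
  @PreCSet (fun m => (A m * B m)%type)
           (fun m n f ab => (act f ab.1, act f ab.2)).

Definition hprod1 A A' C (a : hom A A') : hom (cprod A C) (cprod A' C).
Proof.
refine (@Hom (cprod A C) (cprod A' C) (fun m ac => (a m ac.1, ac.2)) _).
by move=> m n f [x c] /=; rewrite hnat.
Defined.

Definition hprod1r A C C' (i : hom C C') : hom (cprod A C) (cprod A C').
Proof.
refine (@Hom (cprod A C) (cprod A C') (fun m ac => (ac.1, i m ac.2)) _).
by move=> m n f [x c] /=; rewrite hnat.
Defined.

Definition yon m m' (f : bmap m m') : hom (cube m') (cube m).
Proof.
refine (@Hom (cube m') (cube m) (fun p g => bcomp g f) _).
by move=> p q u g; apply: bmap_eq.
Defined.

(* For n = n'.+1, i : 'I_n (coordinate i+1), d : bool (false = 0,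
   true = 1), the face alpha_i^d : I^n' -> I^n is the Yoneda image of the
   B-map [n] -> [n'] sending x_i to the endpoint d and the other x_j,
   in order, to x_1..x_n'.                                              *)
Definition endpt n (d : bool) : pt n := if d then Top else Bot.

Definition face_fun n' (i : 'I_n'.+1) (d : bool) (p : pt n'.+1) : pt n' :=
  match p with
  | Bot => Bot
  | Top => Top
  | PX j => match unlift i j with None => endpt n' d | Some j' => PX j' end
  end.

Definition face_b n' (i : 'I_n'.+1) (d : bool) : bmap n'.+1 n' :=
  @BMap n'.+1 n' (face_fun i d) erefl erefl.

Definition face n' (i : 'I_n'.+1) (d : bool) : hom (cube n') (cube n'.+1) :=
  yon (face_b i d).

(* Open box  sqcup^n_e  (n = n'.+1 >= 1): the union of the images of all
   faces alpha_i^d with (i,d) <> (1,e); coordinate 1 is ord0.           *)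
Definition inbox n' (e : bool) m (u : bmap n'.+1 m) : Prop :=
  exists (i : 'I_n'.+1) (d : bool) (g : bmap n' m),
    ~ (i = ord0 /\ d = e) /\ u = face i d m g.

Lemma inbox_act n' e m m' (f : bmap m m') (u : bmap n'.+1 m) :
  inbox e u -> inbox e (bcomp f u).
Proof.
case=> i [d [g [H ->]]]; exists i, d, (bcomp f g); split => //.
exact: bmap_eq.
Qed.

Definition box (n' : nat) (e : bool) : precset :=
  @PreCSet (fun m => {u : bmap n'.+1 m | inbox e u})
    (fun m m' f u => exist _ (bcomp f (sval u)) (inbox_act f (svalP u))).

Definition box_incl n' e : hom (box n' e) (cube n'.+1).
Proof. by refine (@Hom (box n' e) (cube n'.+1) (fun m u => sval u) _). Defined.

Record ukan (X : cset) := UKan {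
  kphi : forall n' e k', hom (cprod (cube k'.+1) (box n' e)) X ->
                         hom (cprod (cube k'.+1) (cube n'.+1)) X;
  kext : forall n' e k' (b : hom (cprod (cube k'.+1) (box n' e)) X),
      hcomp (kphi b) (hprod1r (cube k'.+1) (box_incl n' e)) = b;
  kunif : forall n' e k' j' (a : hom (cube j'.+1) (cube k'.+1))
                 (b : hom (cprod (cube k'.+1) (box n' e)) X),
      kphi (hcomp b (hprod1 (box n' e) a)) =
      hcomp (kphi b) (hprod1 (cube n'.+1) a) }.
Arguments kphi {X} _ {n' e k'}.

Definition ukan_hom (X Y : cset) (KX : ukan X) (KY : ukan Y) (h : hom X Y) : Prop :=
  forall n' e k' (b : hom (cprod (cube k'.+1) (box n' e)) X),
    hcomp h (kphi KX b) = kphi KY (hcomp h b).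

Definition eqv A (R : relation A) := clos_refl_sym_trans A R.

Definition quot A (R : relation A) : Type :=
  {P : A -> Prop | exists a, P = eqv R a}.

Definition qclass A (R : relation A) (a : A) : quot R :=
  exist _ (eqv R a) (ex_intro _ a erefl).

Lemma qmap_proof A B (R : relation A) (S : relation B) (g : A -> B)
  (Hg : forall a b, R a b -> eqv S (g a) (g b)) (P : quot R) :
  exists b, (fun y => exists a, sval P a /\ eqv S (g a) y) = eqv S b.
Proof.
case: P => P [a0 HP] /=; exists (g a0); subst P.
apply: functional_extensionality => y; apply: propositional_extensionality.
split.
- case=> a [Ha Hy]; apply: rst_trans Hy.
  elim: Ha => [x z /Hg | x | x z _ IH | x z w _ IH1 _ IH2].
  + by [].
  + exact: rst_refl.
  + exact: rst_sym.
  + exact: rst_trans IH1 IH2.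
- move=> H; exists a0; split => //; exact: rst_refl.
Qed.

Definition qmap A B (R : relation A) (S : relation B) (g : A -> B)
  (Hg : forall a b, R a b -> eqv S (g a) (g b)) (P : quot R) : quot S :=
  exist _ (fun y => exists a, sval P a /\ eqv S (g a) y) (qmap_proof Hg P).

(* exponential  X^{sqcup^n_e}: at stage m, maps I^m x sqcup^n_e -> X *)
Definition expo (X : precset) n' e : precset :=
  @PreCSet (fun m => hom (cprod (cube m) (box n' e)) X)
    (fun m m' f b => hcomp b (hprod1 (box n' e) (yon f))).

Definition evalb (X : precset) n' e m (b : expo X n' e m) (u : box n' e m) : X m :=
  b m (bid m, u).

(* stage m of  X  +  coprod_{n>=1,e} X^{sqcup^n_e} x I^n  *)
Definition Tpre (X : precset) (m : nat) : Type :=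
  (X m + {ne : nat * bool & (expo X ne.1 ne.2 m * cube ne.1.+1 m)%type})%type.

(* the pushout identifications  (b, i(u)) ~ eval(b, u) *)
Inductive Trel (X : precset) (m : nat) : Tpre X m -> Tpre X m -> Prop :=
  | Trel_gen n' e (b : expo X n' e m) (u : box n' e m) :
      Trel (inr (existT _ (n', e) (b, box_incl n' e m u))) (inl (evalb b u)).

Definition Tpre_act (X : precset) m m' (f : bmap m m') (a : Tpre X m) : Tpre X m' :=
  match a with
  | inl x => inl (act f x)
  | inr (existT ne (b, g)) => inr (existT _ ne (act (p := expo X ne.1 ne.2) f b, bcomp f g))
  end.

Lemma Tpre_act_resp (X : precset) m m' (f : bmap m m') (a b : Tpre X m) :
  Trel a b -> eqv (@Trel X m') (Tpre_act f a) (Tpre_act f b).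
Proof.
case=> n' e bb u /=.
have -> : act f (evalb bb u) = evalb (act (p := expo X n' e) f bb) (act f u).
  rewrite /evalb /= -hnat /=; congr (bb _ (_, _)); exact: bmap_eq.
apply: rst_step; exact: (Trel_gen (act (p := expo X n' e) f bb) (act f u)).
Qed.

Definition Tobj (X : precset) : precset :=
  @PreCSet (fun m => quot (@Trel X m))
    (fun m m' f => qmap (@Tpre_act_resp X m m' f)).

Definition tpt (X : precset) m (x : X m) : Tobj X m := qclass (@Trel X m) (inl x).

Definition Tpre_map (X Y : precset) (h : hom X Y) m (a : Tpre X m) : Tpre Y m :=
  match a with
  | inl x => inl (h m x)
  | inr (existT ne (b, g)) => inr (existT _ ne (hcomp h b, g))
  end.

Lemma Tpre_map_resp (X Y : precset) (h : hom X Y) m (a b : Tpre X m) :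
  Trel a b -> eqv (@Trel Y m) (Tpre_map h a) (Tpre_map h b).
Proof. case=> n' e bb u /=; apply: rst_step; exact: Trel_gen. Qed.

Definition Tmap (X Y : precset) (h : hom X Y) m : Tobj X m -> Tobj Y m :=
  qmap (@Tpre_map_resp X Y h m).

Record talg (X : cset) := TAlg {
  aphi : hom (Tobj X) X;
  aunit : forall m (x : X m), aphi m (tpt x) = x }.
Arguments aphi {X}.

Definition talg_hom (X Y : cset) (AX : talg X) (AY : talg Y) (h : hom X Y) : Prop :=
  forall m (z : Tobj X m), h m (aphi AX m z) = aphi AY m (Tmap h z).

(* By the universal property of the pushout T(X), an algebra structure on X
   is the same as a family of maps (X^{⊔^n_e} × I^n)_m -> X_m, natural in m,
   that restrict to evaluation on X^{⊔^n_e} × ⊔^n_e.  By the Yoneda lemma, a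
   cell (b, g) of X^{⊔^n_e} × I^n at stage m is a box b : I^m × ⊔^n_e -> X
   together with a point g of I^n, so such a family is the same as a choice of
   fillers φ(b) : I^m × I^n -> X for all boxes, natural in the parameter
   cube I^m; this is exactly a uniform Kan structure.  The only wrinkle is that
   uniform Kan complexes only fill boxes with parameter I^k for k ≥ 1, whereas
   stages m = 0 occur in T(X); we pass through I^(m+1), of which I^m is a
   retract, and uniformity makes the choice of retraction irrelevant. *)
From mathcomp Require Import all_boot.
From Stdlib Require Import Relations ProofIrrelevance FunctionalExtensionality
  PropExtensionality ClassicalEpsilon.

Set Implicit Arguments.
Unset Strict Implicit.
Unset Printing Implicit Defensive.

Lemma sval_inj A (P : A -> Prop) (x y : sig P) : sval x = sval y -> x = y.
Proof.
case: x y => x px [y py] /= E; subst y.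
by rewrite (proof_irrelevance _ px py).
Qed.

Lemma eqv_map A B (R : relation A) (S : relation B) (g : A -> B)
    (Hg : forall a b, R a b -> eqv S (g a) (g b)) a b :
  eqv R a b -> eqv S (g a) (g b).
Proof.
elim=> [x z /Hg | x | x z _ IH | x z w _ IH1 _ IH2] //.
- exact: rst_refl.
- exact: rst_sym.
- exact: rst_trans IH1 IH2.
Qed.

Lemma eqv_const A Y (R : relation A) (g : A -> Y)
    (Hg : forall a b, R a b -> g a = g b) a b :
  eqv R a b -> g a = g b.
Proof. by elim=> [x z /Hg | x | x z _ IH | x z w _ IH1 _ IH2] //; congruence. Qed.

Lemma qclass_eq A (R : relation A) a b : R a b -> qclass R a = qclass R b.
Proof.
move=> Rab; apply: sval_inj; apply: functional_extensionality => y /=.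
apply: propositional_extensionality; split => Hy.
- exact: rst_trans (rst_sym _ _ _ _ (rst_step _ _ _ _ Rab)) Hy.
- exact: rst_trans (rst_step _ _ _ _ Rab) Hy.
Qed.

Lemma qclass_surj A (R : relation A) (z : quot R) : exists a, z = qclass R a.
Proof. by case: z => P [a HP]; exists a; apply: sval_inj. Qed.

Lemma qmap_qclass A B (R : relation A) (S : relation B) (g : A -> B)
    (Hg : forall a b, R a b -> eqv S (g a) (g b)) a :
  qmap Hg (qclass R a) = qclass S (g a).
Proof.
apply: sval_inj; apply: functional_extensionality => y /=.
apply: propositional_extensionality; split.
- by case=> a' [Ha Hy]; apply: rst_trans Hy; apply: (eqv_map Hg).
- by move=> Hy; exists a; split => //; apply: rst_refl.
Qed.

Definition qlift A Y (R : relation A) (g : A -> Y)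
    (Hg : forall a b, R a b -> g a = g b) (z : quot R) : Y :=
  g (sval (constructive_indefinite_description _ (svalP z))).

Lemma qlift_qclass A Y (R : relation A) (g : A -> Y)
    (Hg : forall a b, R a b -> g a = g b) a :
  qlift Hg (qclass R a) = g a.
Proof.
rewrite /qlift; case: constructive_indefinite_description => a' /= E.
have : eqv R a a' by rewrite E; apply: rst_refl.
by move/(eqv_const Hg).
Qed.

Lemma hom_congr (A B : precset) (h k : hom A B) : h = k -> forall m (a : A m), h m a = k m a.
Proof. by move=> ->. Qed.

(* [bwiden m] and [bcollapse m] induce a projection I^(m+1) -> I^m and a
   face I^m -> I^(m+1) that it retracts; [bsucc f] is f × 1_I. *)
Definition bwiden m : bmap m m.+1 :=
  @BMap m m.+1 (fun x => match x with
                         | Bot => Bot | Top => Top | PX i => PX (lift ord_max i) end)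
    erefl erefl.

Definition bcollapse m : bmap m.+1 m :=
  @BMap m.+1 m (fun x => match x with
                         | Bot => Bot | Top => Top
                         | PX j => if unlift ord_max j is Some j' then PX j' else Bot
                         end)
    erefl erefl.

Definition bsucc m m' (f : bmap m m') : bmap m.+1 m'.+1 :=
  @BMap m.+1 m'.+1 (fun x => match x with
                             | Bot => Bot | Top => Top
                             | PX j => if unlift ord_max j is Some j'
                                       then bwiden m' (f (PX j')) else PX ord_max
                             end)
    erefl erefl.

Lemma bwidenK m : cancel (bwiden m) (bcollapse m).
Proof. by case=> //= i; rewrite liftK. Qed.

Lemma bcollapse_widen m : bcomp (bcollapse m) (bwiden m) = bid m.
Proof. by apply: bmap_eq; apply: functional_extensionality; apply: bwidenK. Qed.

Lemma bsucc_widen m m' (f : bmap m m') : bcomp (bsucc f) (bwiden m) = bcomp (bwiden m') f.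
Proof.
apply: bmap_eq; apply: functional_extensionality => -[||i] /=.
- by rewrite bfun_bot.
- by rewrite bfun_top.
- by rewrite liftK.
Qed.

Lemma bcollapse_succ m m' (f : bmap m m') :
  bcomp (bcollapse m') (bsucc f) = bcomp f (bcollapse m).
Proof.
apply: bmap_eq; apply: functional_extensionality => -[||j] /=.
- by rewrite bfun_bot.
- by rewrite bfun_top.
- case: unliftP => [j'|] _ /=; first exact: bwidenK.
  by rewrite unlift_none bfun_bot.
Qed.

Definition restr (X C : precset) k r (b : hom (cprod (cube k) C) X) (u : bmap k r) :
  hom (cprod (cube r) C) X :=
  hcomp b (hprod1 C (yon u)).

Lemma restr_comp (X C : precset) k r s (b : hom (cprod (cube k) C) X)
    (u : bmap k r) (f : bmap r s) :
  restr (restr b u) f = restr b (bcomp f u).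
Proof. by apply: hom_eq => t [w z] /=; congr (b t (_, z)); apply: bmap_eq. Qed.

Lemma restr_id (X C : precset) k (b : hom (cprod (cube k) C) X) : restr b (bid k) = b.
Proof. by apply: hom_eq => t [w z] /=; congr (b t (_, z)); apply: bmap_eq. Qed.

Lemma hcomp_restr (X Y C : precset) k r (h : hom X Y)
    (b : hom (cprod (cube k) C) X) (u : bmap k r) :
  hcomp h (restr b u) = restr (hcomp h b) u.
Proof. exact: hom_eq. Qed.

Definition tcell (X : precset) n' e m (b : expo X n' e m) (g : cube n'.+1 m) : Tobj X m :=
  qclass (@Trel X m) (inr (existT _ (n', e) (b, g))).

Lemma Tobj_ind (X : precset) m (P : Tobj X m -> Prop) :
  (forall x, P (tpt x)) ->
  (forall n' e (b : expo X n' e m) g, P (tcell b g)) ->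
  forall z, P z.
Proof.
move=> Pt Pc z; have [[x | [[n' e] [b g]]] ->] := qclass_surj z; [exact: Pt | exact: Pc].
Qed.

Lemma tcell_box (X : precset) n' e m (b : expo X n' e m) (u : box n' e m) :
  tcell b (box_incl n' e m u) = tpt (evalb b u).
Proof. exact/qclass_eq/Trel_gen. Qed.

Lemma act_tpt (X : precset) m m' (f : bmap m m') (x : X m) :
  act (p := Tobj X) f (tpt x) = tpt (act f x).
Proof. exact: qmap_qclass. Qed.

Lemma act_tcell (X : precset) n' e m m' (f : bmap m m') (b : expo X n' e m) g :
  act (p := Tobj X) f (tcell b g) = tcell (restr b f) (bcomp f g).
Proof. exact: qmap_qclass. Qed.

Lemma Tmap_tpt (X Y : precset) (h : hom X Y) m (x : X m) : Tmap h (tpt x) = tpt (h m x).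
Proof. exact: qmap_qclass. Qed.

Lemma Tmap_tcell (X Y : precset) (h : hom X Y) n' e m (b : expo X n' e m) g :
  Tmap h (tcell b g) = tcell (hcomp h b) g.
Proof. exact: qmap_qclass. Qed.

Section AlgebraKan.
Variables (X : cset) (A : talg X).

Definition talg_fill n' e k' (b : hom (cprod (cube k'.+1) (box n' e)) X) :
  hom (cprod (cube k'.+1) (cube n'.+1)) X.
Proof.
refine (@Hom (cprod (cube k'.+1) (cube n'.+1)) X
  (fun r uv => aphi A r (tcell (restr b uv.1) uv.2)) _).
by move=> r s f [u v]; rewrite /= -hnat act_tcell restr_comp.
Defined.

Lemma talg_fill_ext n' e k' (b : hom (cprod (cube k'.+1) (box n' e)) X) :
  hcomp (talg_fill b) (hprod1r (cube k'.+1) (box_incl n' e)) = b.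
Proof.
apply: hom_eq => r [u w] /=.
rewrite tcell_box aunit /evalb /=.
by congr (b r (_, w)); apply: bmap_eq.
Qed.

Lemma talg_fill_unif n' e k' j' (a : hom (cube j'.+1) (cube k'.+1))
    (b : hom (cprod (cube k'.+1) (box n' e)) X) :
  talg_fill (hcomp b (hprod1 (box n' e) a)) = hcomp (talg_fill b) (hprod1 (cube n'.+1) a).
Proof.
apply: hom_eq => r [u v] /=; congr (aphi A r (tcell _ v)).
apply: hom_eq => s [w z] /=; congr (b s (_, z)); exact: (hnat _ _ a).
Qed.

Definition ukan_of_talg : ukan X := UKan talg_fill_ext talg_fill_unif.

Lemma talg_tcell n' e m (b : expo X n' e m) g :
  aphi A m (tcell b g) = kphi ukan_of_talg (restr b (bwiden m)) m (bcollapse m, g).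
Proof. by rewrite /= restr_comp bcollapse_widen restr_id. Qed.

End AlgebraKan.

Section KanAlgebra.
Variables (X : cset) (K : ukan X).

Definition ukan_eval m (a : Tpre X m) : X m :=
  match a with
  | inl x => x
  | inr (existT ne (b, g)) => kphi K (restr b (bwiden m)) m (bcollapse m, g)
  end.

Lemma ukan_eval_resp m (a a' : Tpre X m) : Trel a a' -> ukan_eval a = ukan_eval a'.
Proof.
case=> n' e b u /=.
have /= -> := hom_congr (kext K (restr b (bwiden m))) (bcollapse m, u).
by rewrite /evalb /= bcollapse_widen.
Qed.

Definition ukan_alg_fun m : Tobj X m -> X m := qlift (@ukan_eval_resp m).

Lemma ukan_alg_fun_tpt m (x : X m) : ukan_alg_fun (tpt x) = x.
Proof. exact: qlift_qclass. Qed.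

Lemma ukan_alg_fun_tcell n' e m (b : expo X n' e m) g :
  ukan_alg_fun (tcell b g) = kphi K (restr b (bwiden m)) m (bcollapse m, g).
Proof. exact: qlift_qclass. Qed.

(* Both widenings of [b] along [f] are restrictions of one box along
   [bsucc f], which uniformity moves outside the filler. *)
Lemma ukan_alg_fun_nat m m' (f : bmap m m') (z : Tobj X m) :
  ukan_alg_fun (act f z) = act f (ukan_alg_fun z).
Proof.
elim/Tobj_ind: z => [x | n' e b g].
  by rewrite act_tpt !ukan_alg_fun_tpt.
rewrite act_tcell !ukan_alg_fun_tcell -hnat /=.
have -> : restr (restr b f) (bwiden m') = restr (restr b (bwiden m)) (bsucc f).
  by rewrite !restr_comp bsucc_widen.
by rewrite [kphi K _](kunif K (yon (bsucc f))) /= bcollapse_succ.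
Qed.

Definition talg_of_ukan : talg X :=
  @TAlg X (Hom (@ukan_alg_fun) (@ukan_alg_fun_nat)) ukan_alg_fun_tpt.

End KanAlgebra.

Lemma talg_eq (X : cset) (A B : talg X) : aphi A = aphi B -> A = B.
Proof.
case: A B => a ua [b ub] /= E; subst b.
by rewrite (proof_irrelevance _ ua ub).
Qed.

Lemma ukan_eq (X : cset) (K L : ukan X) :
  (forall n' e k' b, @kphi X K n' e k' b = @kphi X L n' e k' b) -> K = L.
Proof.
case: K L => k ke ku [l le lu] /= E.
have {}E : k = l.
  do 3 apply: functional_extensionality_dep => ?.
  exact: functional_extensionality.
subst l; by rewrite (proof_irrelevance _ ke le) (proof_irrelevance _ ku lu).
Qed.

Lemma ukan_of_talgK (X : cset) : cancel (@ukan_of_talg X) (@talg_of_ukan X).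
Proof.
move=> A; apply: talg_eq; apply: hom_eq => m.
elim/Tobj_ind => [x | n' e b g] /=.
- by rewrite ukan_alg_fun_tpt aunit.
- by rewrite ukan_alg_fun_tcell talg_tcell.
Qed.

(* Uniformity along the projection I^(r+1) -> I^k induced by [bwiden r]
   and [u] recovers the original filler. *)
Lemma talg_of_ukanK (X : cset) : cancel (@talg_of_ukan X) (@ukan_of_talg X).
Proof.
move=> K; apply: ukan_eq => n' e k' b; apply: hom_eq => r [u v] /=.
rewrite ukan_alg_fun_tcell restr_comp.
rewrite [kphi K _](kunif K (yon (bcomp (bwiden r) u))) /=.
congr (kphi K b r (_, v)); apply: bmap_eq; apply: functional_extensionality => x /=.
exact: bwidenK.
Qed.

Lemma talg_homE (X Y : cset) (A : talg X) (B : talg Y) (h : hom X Y) :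
  talg_hom A B h <-> ukan_hom (ukan_of_talg A) (ukan_of_talg B) h.
Proof.
split=> [Hh n' e k' b | Hh m].
- apply: hom_eq => r [u v] /=.
  by rewrite Hh Tmap_tcell hcomp_restr.
- elim/Tobj_ind => [x | n' e b g].
    by rewrite Tmap_tpt !aunit.
  rewrite Tmap_tcell !talg_tcell -hcomp_restr.
  exact: (hom_congr (Hh n' e m (restr b (bwiden m))) (bcollapse m, g)).
Qed.

Theorem proposition3p1 :
  exists (F : forall X : cset, talg X -> ukan X) (G : forall X : cset, ukan X -> talg X),
    (forall (X : cset) (A : talg X), G X (F X A) = A) /\
    (forall (X : cset) (K : ukan X), F X (G X K) = K) /\
    (forall (X Y : cset) (A : talg X) (B : talg Y) (h : hom X Y),
        talg_hom A B h <-> ukan_hom (F X A) (F Y B) h).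
Proof.
exists ukan_of_talg, talg_of_ukan; split; [|split].
- exact: ukan_of_talgK.
- exact: talg_of_ukanK.
- exact: talg_homE.
Qed.
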